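(* Let $k$ be a field and $d\le n$ integers in $\mathbb{N}$. The morphism $$\beta_{d,n}:Q_d\times\mathcal{L}_n\mathbb{G}_m\to\mathcal{L}_n^{\le d}\mathbb{A}^1,\qquad (q,u)\mapsto qu,$$ is smooth.
   Context: $\mathcal{L}_n\mathbb{A}^1=\operatorname{Spec}k[x_0,\ldots,x_n]$ is the space of $n$-jets of $\mathbb{A}^1$, with $R$-points $R[t]/(t^{n+1})$; $\mathcal{L}_n\mathbb{G}_m$ is the space of $n$-jets of $\mathbb{G}_m$, with $R$-points $(R[t]/(t^{n+1}))^\times$. For $d\le n$, $\mathcal{L}_n^{\le d}\mathbb{A}^1$ is the open subscheme of $\mathcal{L}_n\mathbb{A}^1$ where $x_0,\ldots,x_d$ do not all vanish. $Q_d$ is the affine space of monic polynomials of degree $d$; $qu$ is taken modulo $t^{n+1}$. *)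

From HB Require Import structures.
From mathcomp Require Import all_boot all_order all_algebra.
Set Implicit Arguments. Unset Strict Implicit. Unset Printing Implicit Defensive.
Import GRing.Theory.
Local Open Scope ring_scope.

(* Functor-of-points description of the schemes involved, on a commutative
   k-algebra R.  An R-point of L_n A^1 is a jet x_0 + x_1 t + ... + x_n t^n,
   stored as its coefficient vector {ffun 'I_n.+1 -> R}. *)

(* The monic polynomial t^d + a_{d-1} t^{d-1} + ... + a_0 attached to an
   R-point a of Q_d = A^d. *)
Definition monic_of (R : comNzRingType) (d : nat) (a : {ffun 'I_d -> R}) : {poly R} :=
  'X^d + \sum_(j < d) a j *: 'X^j.

Definition jet_poly (R : comNzRingType) (n : nat) (u : {ffun 'I_n.+1 -> R}) : {poly R} :=
  \poly_(i < n.+1) u (inord i).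

Definition beta (R : comNzRingType) (d n : nat) (a : {ffun 'I_d -> R})
    (u : {ffun 'I_n.+1 -> R}) : {ffun 'I_n.+1 -> R} :=
  [ffun i : 'I_n.+1 => (monic_of a * jet_poly u)`_i].

(* R-points of L_n G_m : jets whose constant term is invertible. *)
Definition is_Gm_jet (R : comNzRingType) (n : nat) (u : {ffun 'I_n.+1 -> R}) : Prop :=
  exists v : R, u ord0 * v = 1.

(* R-points of L_n^{<= d} A^1 : jets such that x_0, ..., x_d generate the
   unit ideal of R (i.e. Spec R -> L_n A^1 factors through the open
   subscheme where x_0, ..., x_d do not all vanish). *)
Definition is_le_d_jet (R : comNzRingType) (d n : nat) (x : {ffun 'I_n.+1 -> R}) : Prop :=
  exists c : 'I_n.+1 -> R, \sum_(i < n.+1 | (i <= d)%N) c i * x i = 1.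

(* Formal smoothness of beta_{d,n} : Q_d x L_n G_m -> L_n^{<= d} A^1
   (EGA IV 17.1.1, infinitesimal lifting property for affine test schemes
   Spec S -> Spec R over the target, with square-zero ideal ker pi):
   for every surjective k-algebra map pi : R -> S of commutative k-algebras
   with square-zero kernel, every R-point x of the target and every S-point
   (abar, ubar) of the source with beta(abar, ubar) = pi(x), there is an
   R-point (a, u) of the source lifting (abar, ubar) with beta(a, u) = x. *)
Definition beta_formally_smooth (k : fieldType) (d n : nat) : Prop :=
  forall (R S : comAlgType k) (pi : {rmorphism R -> S}),
    (forall c : k, pi (c%:A) = c%:A) ->
    (forall s : S, exists r : R, pi r = s) ->
    (forall r1 r2 : R, pi r1 = 0 -> pi r2 = 0 -> r1 * r2 = 0) ->
    forall (x : {ffun 'I_n.+1 -> R}) (abar : {ffun 'I_d -> S})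
           (ubar : {ffun 'I_n.+1 -> S}),
      is_le_d_jet d x ->
      is_Gm_jet ubar ->
      beta abar ubar = [ffun i => pi (x i)] ->
      exists (a : {ffun 'I_d -> R}) (u : {ffun 'I_n.+1 -> R}),
        [/\ is_Gm_jet u, beta a u = x,
            [ffun j => pi (a j)] = abar & [ffun i => pi (u i)] = ubar].

From mathcomp Require Import all_boot all_order all_algebra.
From mathcomp Require Import ring.
Set Implicit Arguments. Unset Strict Implicit.
Import GRing.Theory.
Local Open Scope ring_scope.

(* Lift the S-point to any (q0, u0) over R; u0 is automatically a unit since
   the kernel I of pi is nilpotent.  The defect x - q0 u0 (mod t^(n+1)) has
   coefficients in I, and as I^2 = 0 a correction (q0 + r, u0 + m) with r, m
   over I has product q0 u0 + r u0 + q0 m.  So it suffices to write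
   (x - q0 u0) u0^-1 = w q0 + r with deg r < d, i.e. to divide by the monic q0,
   and to take m = w u0: division by a monic polynomial commutes with pi, so
   w and r lie over I along with the dividend. *)

Definition jet_eq (R : nzSemiRingType) (n : nat) (p q : {poly R}) :=
  forall i, (i <= n)%N -> p`_i = q`_i.

Section Jets.
Variables (R : comNzRingType) (n : nat).
Implicit Types p q : {poly R}.

Lemma jet_eq_mull p q r : jet_eq n p q -> jet_eq n (r * p) (r * q).
Proof.
move=> epq i le_in; rewrite !coefM; apply: eq_bigr => j _.
by rewrite epq // (leq_trans _ le_in) // leq_subr.
Qed.

Lemma coef_expr_ltn_eq0 p m i : p`_0 = 0 -> (i < m)%N -> (p ^+ m)`_i = 0.
Proof.
move=> p0; elim: m i => // m IHm i lt_im.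
rewrite exprS coefM big1 // => -[[|j] lt_ji] _ /=; first by rewrite p0 mul0r.
rewrite ltnS in lt_ji; rewrite IHm ?mulr0 // ltn_subLR // addSn ltnS.
by rewrite (leq_trans _ (leq_addl j m)) // -ltnS.
Qed.

(* The geometric series in 1 - c p, truncated at degree n. *)
Lemma exists_jet_inv p c : p`_0 * c = 1 -> exists v, jet_eq n (v * p) 1.
Proof.
move=> p0c; pose e := 1 - c *: p.
have e0 : e`_0 = 0 by rewrite coefB coefZ coef1 mulrC p0c subrr.
exists (c *: \sum_(k < n.+1) e ^+ k).
have -> : (c *: \sum_(k < n.+1) e ^+ k) * p = 1 - e ^+ n.+1.
  rewrite -scalerAl scalerAr.
  have -> : c *: p = 1 - e by rewrite opprB addrC subrK.
  by rewrite mulrC -opprB mulNr -subrX1 opprB.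
by move=> i le_in; rewrite coefB coef_expr_ltn_eq0 ?subr0.
Qed.

End Jets.

Section MonicDivisionMap.
Variables (R S : nzRingType) (f : {rmorphism R -> S}).
Variables (q : {poly R}) (q_monic : q \is monic).

Let size_map_rmodp p : (size (map_poly f (Pdiv.Ring.rmodp p q)) <
  size (map_poly f q))%N.
Proof.
rewrite (size_map_poly_id0 (p := q)); last first.
  by rewrite (monicP q_monic) rmorph1 oner_neq0.
apply: leq_ltn_trans (size_poly _ _) _.
by rewrite Pdiv.Ring.ltn_rmodp monic_neq0.
Qed.

Lemma rdivp_map_monic p : map_poly f (Pdiv.Ring.rdivp p q) =
  Pdiv.Ring.rdivp (map_poly f p) (map_poly f q).
Proof.
rewrite {2}(Pdiv.RingMonic.rdivp_eq q_monic p) rmorphD rmorphM /=.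
by rewrite Pdiv.RingMonic.rdivp_addl_mul_small ?monic_map ?size_map_rmodp.
Qed.

Lemma rmodp_map_monic p : map_poly f (Pdiv.Ring.rmodp p q) =
  Pdiv.Ring.rmodp (map_poly f p) (map_poly f q).
Proof.
rewrite {2}(Pdiv.RingMonic.rdivp_eq q_monic p) rmorphD rmorphM /=.
by rewrite Pdiv.RingMonic.rmodp_addl_mul_small ?monic_map ?size_map_rmodp.
Qed.

End MonicDivisionMap.

Lemma coef_map_eq0 (R S : nzRingType) (f : {rmorphism R -> S}) p i :
  map_poly f p = 0 -> f p`_i = 0.
Proof. by move=> fp0; rewrite -coef_map fp0 coef0. Qed.

Section SquareZeroExtension.
Variables (R S : comNzRingType) (pi : {rmorphism R -> S}).
Hypothesis pi_surj : forall s : S, exists r : R, pi r = s.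
Hypothesis pi_sqr0 : forall r1 r2 : R, pi r1 = 0 -> pi r2 = 0 -> r1 * r2 = 0.

Lemma ffun_lift (I : finType) (g : {ffun I -> S}) :
  exists h : {ffun I -> R}, [ffun i => pi (h i)] = g.
Proof.
have [h hE] := fin_all_exists (fun i => pi_surj (g i)).
by exists (finfun h); apply/ffunP => i; rewrite !ffunE.
Qed.

(* If pi (c v) = 1 then e = c v - 1 is square-zero, so c v (1 - e) = 1. *)
Lemma unit_lift c s : pi c * s = 1 -> exists c', c * c' = 1.
Proof.
move=> pics; have [v piv] := pi_surj s; pose e := c * v - 1.
have pie : pi e = 0 by rewrite rmorphB rmorphM piv pics rmorph1 subrr.
exists (v * (1 - e)); rewrite mulrA -[c * v](subrK 1) -/e.
by rewrite mulrDl mul1r mulrBr mulr1 (pi_sqr0 pie pie) subr0 addrCA subrr addr0.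
Qed.

Lemma map_poly_ker_mul p q :
  map_poly pi p = 0 -> map_poly pi q = 0 -> p * q = 0.
Proof.
move=> pip0 piq0; apply/polyP => i; rewrite coefM coef0 big1 // => j _.
by apply: pi_sqr0; apply: coef_map_eq0.
Qed.

Lemma jet_factor_lift n (q0 u0 x : {poly R}) c :
    q0 \is monic -> u0`_0 * c = 1 ->
    jet_eq n (map_poly pi (q0 * u0)) (map_poly pi x) ->
  exists r m : {poly R},
    [/\ (size r < size q0)%N, map_poly pi r = 0, map_poly pi m = 0
       & jet_eq n ((q0 + r) * (u0 + m)) x].
Proof.
move=> q0_monic u0c pi_q0u0_x.
have [z z_eq piz0] : exists2 z, jet_eq n z (x - q0 * u0) & map_poly pi z = 0.
  exists (take_poly n.+1 (x - q0 * u0)) => [i le_in|].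
    by rewrite coef_take_poly ltnS le_in.
  apply/polyP => i; rewrite coef_map coef_take_poly coef0.
  case: ltnP => [lt_in|_]; last exact: raddf0.
  rewrite coefB raddfB; move: (pi_q0u0_x i lt_in).
  by rewrite !coef_map => ->; rewrite subrr.
have [v vu0] := exists_jet_inv n u0c.
have [w [r [zvE size_r piw0 pir0]]] : exists w r, [/\ z * v = w * q0 + r,
    (size r < size q0)%N, map_poly pi w = 0 & map_poly pi r = 0].
  have pizv0 : map_poly pi (z * v) = 0 by rewrite rmorphM /= piz0 mul0r.
  exists (Pdiv.Ring.rdivp (z * v) q0), (Pdiv.Ring.rmodp (z * v) q0); split.
  - exact: Pdiv.RingMonic.rdivp_eq.
  - by rewrite Pdiv.Ring.ltn_rmodpN0 ?monic_neq0.
  - by rewrite rdivp_map_monic // pizv0 Pdiv.Ring.rdiv0p.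
  - by rewrite rmodp_map_monic // pizv0 Pdiv.Ring.rmod0p.
exists r, (w * u0); split => //; first by rewrite rmorphM /= piw0 mul0r.
have -> : (q0 + r) * (u0 + w * u0) = q0 * u0 + (w * q0 + r) * u0 + r * w * u0.
  by ring.
rewrite -zvE (map_poly_ker_mul pir0 piw0) mul0r addr0 -mulrA => i le_in.
by rewrite coefD (jet_eq_mull z vu0) // mulr1 z_eq // coefB addrC subrK.
Qed.

End SquareZeroExtension.

Section PointsOfJetSpaces.
Variables (R : comNzRingType) (d n : nat).

Lemma coef_jet_poly (u : {ffun 'I_n.+1 -> R}) (i : 'I_n.+1) :
  (jet_poly u)`_i = u i.
Proof. by rewrite coef_poly ltn_ord inord_val. Qed.

Lemma jet_poly_coefs (p : {poly R}) :
  jet_eq n (jet_poly [ffun i : 'I_n.+1 => p`_i]) p.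
Proof. by move=> i le_in; rewrite coef_poly ltnS le_in ffunE inordK. Qed.

Lemma beta_jet_eqP (a : {ffun 'I_d -> R}) (u x : {ffun 'I_n.+1 -> R}) :
  beta a u = x <-> jet_eq n (monic_of a * jet_poly u) (jet_poly x).
Proof.
split=> [<- i le_in | ex]; last first.
  by apply/ffunP => i; rewrite ffunE ex ?coef_jet_poly // -ltnS.
by rewrite coef_poly ltnS le_in ffunE inordK.
Qed.

Lemma size_monic_of_sum (a : {ffun 'I_d -> R}) :
  (size (\sum_(j < d) a j *: 'X^j)%R <= d)%N.
Proof.
apply/leq_sizeP => i le_di; rewrite coef_sum big1 // => j _.
by rewrite coefZ coefXn (gtn_eqF (leq_trans (ltn_ord j) le_di)) mulr0.
Qed.

Lemma monic_of_monic (a : {ffun 'I_d -> R}) : monic_of a \is monic.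
Proof.
rewrite monicE lead_coefDl ?lead_coefXn //.
by rewrite size_polyXn ltnS size_monic_of_sum.
Qed.

Lemma size_monic_of (a : {ffun 'I_d -> R}) : size (monic_of a) = d.+1.
Proof. by rewrite size_polyDl size_polyXn // ltnS size_monic_of_sum. Qed.

Lemma monic_ofD (a : {ffun 'I_d -> R}) (r : {poly R}) :
  (size r <= d)%N -> monic_of [ffun j => a j + r`_j] = monic_of a + r.
Proof.
move=> size_r; rewrite /monic_of -addrA; congr (_ + _).
rewrite (eq_bigr (fun j : 'I_d => a j *: 'X^j + r`_j *: 'X^j)) => [|j _].
  rewrite big_split /= -poly_def; congr (_ + _); apply/polyP => i.
  rewrite coef_poly; case: ltnP => // le_di.
  by rewrite nth_default ?(leq_trans size_r).
by rewrite ffunE scalerDl.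
Qed.

Variables (S : comNzRingType) (f : {rmorphism R -> S}).

Lemma map_monic_of (a : {ffun 'I_d -> R}) :
  map_poly f (monic_of a) = monic_of [ffun j => f (a j)].
Proof.
rewrite /monic_of rmorphD /= map_polyXn rmorph_sum /=; congr (_ + _).
by apply: eq_bigr => j _; rewrite map_polyZ map_polyXn ffunE.
Qed.

Lemma map_jet_poly (u : {ffun 'I_n.+1 -> R}) :
  map_poly f (jet_poly u) = jet_poly [ffun i => f (u i)].
Proof.
apply/polyP => i; rewrite coef_map !coef_poly.
by case: (_ < _)%N; rewrite ?ffunE ?raddf0.
Qed.

End PointsOfJetSpaces.

Theorem proposition3p9 (k : fieldType) (d n : nat) (hdn : (d <= n)%N) :
  beta_formally_smooth k d n.
Proof.
move=> R S pi _ pi_surj pi_sqr0 x abar ubar _ + +.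
have [a0 <-] := ffun_lift pi_surj abar; have [u0 <-] := ffun_lift pi_surj ubar.
move=> [vb ubar0] beta_bar.
have [c u0c] : exists c, (jet_poly u0)`_0 * c = 1.
  apply: (unit_lift pi_surj pi_sqr0).
  by rewrite (coef_jet_poly u0 ord0) -ubar0 ffunE.
have pi_eq : jet_eq n (map_poly pi (monic_of a0 * jet_poly u0))
                      (map_poly pi (jet_poly x)).
  by rewrite rmorphM /= map_monic_of !map_jet_poly; apply/beta_jet_eqP.
have [r [m [size_r pir0 pim0 qu_x]]] :=
  jet_factor_lift pi_sqr0 (monic_of_monic a0) u0c pi_eq.
have pi_u (i : 'I_n.+1) : pi (jet_poly u0 + m)`_i = pi (u0 i).
  by rewrite coefD rmorphD (coef_map_eq0 _ pim0) addr0 coef_jet_poly.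
exists [ffun j => a0 j + r`_j], [ffun i : 'I_n.+1 => (jet_poly u0 + m)`_i].
split.
- apply: (unit_lift pi_surj pi_sqr0 (s := vb)).
  by rewrite ffunE pi_u -ubar0 ffunE.
- apply/beta_jet_eqP; rewrite monic_ofD => [i le_in|]; last first.
    by rewrite -ltnS -(size_monic_of a0).
  by rewrite (jet_eq_mull _ (jet_poly_coefs _)) // qu_x.
- by apply/ffunP => j; rewrite !ffunE rmorphD (coef_map_eq0 _ pir0) addr0.
- by apply/ffunP => i; rewrite !ffunE pi_u.
Qed.
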